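(* Let $\tau$ be an infinite cardinal and let $(G,X,\alpha)$ be a $G$-space with transitive action $\alpha$ and $\chi(X)\le\tau$. If $G$ is $\tau$-narrow (respectively $\tau$-balanced), then there exists a topological group $H$ with $w(H)\le\tau$ (respectively $\chi(H)\le\tau$) which admits a continuous transitive action on $X$.
   Context: All spaces are Tychonoff. A $G$-space $(G,X,\alpha)$ is a topological group $G$ with a continuous action $\alpha:G\times X\to X$; transitive means $Gx=X$ for $x\in X$. A topological group $G$ is $\tau$-narrow if for every neighborhood $U$ of the unit there is $A\subset G$ with $|A|\le\tau$ and $AU=G$. $G$ is $\tau$-balanced if for every neighborhood $U$ of the unit there is a family $\gamma$ of neighborhoods of the unit with $|\gamma|\le\tau$ such that for every $x\in G$ some $V\in\gamma$ satisfies $xVx^{-1}\subset U$. *)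

From HB Require Import structures.
From mathcomp Require Import all_boot all_order all_algebra.
From mathcomp Require Import all_classical all_reals topology.
From mathcomp Require Import Rstruct Rstruct_topology.
From Stdlib Require Import Reals.

Set Implicit Arguments.
Unset Strict Implicit.
Unset Printing Implicit Defensive.

Local Open Scope classical_set_scope.

Definition completely_regular (T : topologicalType) : Prop :=
  forall (F : set T) (x : T), closed F -> ~ F x ->
    exists f : T -> Rdefinitions.R, continuous f /\ f x = 0%R /\
      (forall y, F y -> f y = 1%R).

Definition tychonoff_space (T : topologicalType) : Prop :=
  hausdorff_space T /\ completely_regular T.

Definition is_topgroup (G : topologicalType) (mul : G -> G -> G)
    (inv : G -> G) (one : G) : Prop :=
  [/\ (forall a b c, mul a (mul b c) = mul (mul a b) c),
      (forall a, mul one a = a /\ mul a one = a),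
      (forall a, mul (inv a) a = one /\ mul a (inv a) = one),
      continuous (fun p : G * G => mul p.1 p.2) &
      continuous inv].

Definition is_continuous_action (G X : topologicalType) (mul : G -> G -> G)
    (one : G) (alpha : G -> X -> X) : Prop :=
  [/\ continuous (fun p : G * X => alpha p.1 p.2),
      (forall x, alpha one x = x) &
      (forall g h x, alpha (mul g h) x = alpha g (alpha h x))].

Definition transitive_action (G X : Type) (alpha : G -> X -> X) : Prop :=
  forall x y : X, exists g : G, alpha g x = y.

(* Cardinals: an infinite cardinal tau is represented by a type K with
   infinite_set [set: K]; "|A| <= tau" is  (A #<= [set: K])%card. *)

Definition character_le (X : topologicalType) (K : Type) : Prop :=
  forall x : X, exists B : set (set X),
    (B #<= [set: K])%card /\
    (forall b, B b -> open b /\ b x) /\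
    (forall W, nbhs x W -> exists2 b, B b & b `<=` W).

Definition weight_le (X : topologicalType) (K : Type) : Prop :=
  exists B : set (set X),
    (B #<= [set: K])%card /\
    (forall b, B b -> open b) /\
    (forall (W : set X) (x : X), open W -> W x ->
       exists2 b, B b & b x /\ b `<=` W).

Definition narrow (G : topologicalType) (mul : G -> G -> G) (one : G)
    (K : Type) : Prop :=
  forall U : set G, nbhs one U ->
    exists A : set G, (A #<= [set: K])%card /\
      (forall g, exists a u, A a /\ U u /\ g = mul a u).

Definition balanced (G : topologicalType) (mul : G -> G -> G)
    (inv : G -> G) (one : G) (K : Type) : Prop :=
  forall U : set G, nbhs one U ->
    exists gamma : set (set G), (gamma #<= [set: K])%card /\
      (forall V, gamma V -> nbhs one V) /\
      (forall x : G, exists2 V, gamma V &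
         forall v, V v -> U (mul (mul x v) (inv x))).

(* existence of a topological group H with property P admitting a
   continuous transitive action on X (H Tychonoff, per the paper's
   standing convention) *)
Definition acts_transitively_via (X : topologicalType)
    (P : forall H : topologicalType, (H -> H -> H) -> (H -> H) -> H -> Prop)
    : Prop :=
  exists (H : topologicalType) (mul : H -> H -> H) (inv : H -> H) (one : H)
         (beta : H -> X -> X),
    [/\ tychonoff_space H, is_topgroup mul inv one, P H mul inv one,
        is_continuous_action mul one beta & transitive_action beta].

(* Close a small family of neighbourhoods of the unit of G under halving
   (V V <= U), inversion, finite intersections and conjugation; the last step
   keeps it of size tau precisely because G is tau-balanced.  Seeding it with
   witnesses of the continuity of the action at one point x0, whose local
   character is at most tau, makes it control the continuity of the action at
   x0, hence, by transitivity and conjugation, everywhere.  Such a family F is a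
   base at the unit of a coarser group topology; its intersection N is a normal
   subgroup acting trivially on X, and H = G/N with the uniformity given by F
   is a Hausdorff (so Tychonoff) group of character at most tau acting
   continuously and transitively on X.  A tau-narrow group is tau-balanced, and
   then the translates a U with a in tau-sized covering sets form a base of H,
   so w(H) <= tau.  The size bookkeeping relies on |tau x tau| = tau, proved
   with Zorn's lemma. *)

From HB Require Import structures.
From mathcomp Require Import all_boot all_order all_algebra.
From mathcomp Require Import all_classical all_reals topology.
From mathcomp Require Import Rstruct Rstruct_topology normedtype.

Set Implicit Arguments.
Unset Strict Implicit.
Unset Printing Implicit Defensive.

Local Open Scope classical_set_scope.

Lemma choice_in (X Y : Type) (d : X -> Y) (Q : X -> Prop) (R : X -> Y -> Prop) :
  (forall x, Q x -> exists y, R x y) -> exists f : X -> Y, forall x, Q x -> R x (f x).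
Proof.
move=> QR; have /choice[f Hf] : forall x, exists y, Q x -> R x y.
  move=> x; have [/QR[y Rxy]|nQ] := pselect (Q x); first by exists y.
  by exists (d x).
by exists f.
Qed.

Lemma injective_linv (X Y : Type) (x0 : X) (f : X -> Y) :
  injective f -> exists g : Y -> X, cancel f g.
Proof.
move=> finj; have [g gP] := choice_in (fun _ => x0) (Q := range f)
  (R := fun y x => f x = y) (fun _ '(ex_intro2 x _ fx) => ex_intro _ x fx).
by exists g => x; apply: finj; apply: gP; exists x.
Qed.

Lemma infinite_nat_inj (K : Type) :
  infinite_set [set: K] -> exists e : nat -> K, injective e.
Proof.
move=> /infiniteP /card_leP [f].
exists (fun n => val (f (SigSub (mem_set (I : [set: nat] n))))) => m n /val_inj.
by move=> /(@inj _ _ _ f); rewrite !inE => /(_ I I) [].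
Qed.

Lemma total_on_subset_ub (T : Type) (F : set (set T)) (X1 X2 : set T) :
  total_on F subset -> F X1 -> F X2 -> exists2 X, F X & X1 `<=` X /\ X2 `<=` X.
Proof.
move=> Ftot FX1 FX2.
by have [X12|X21] := Ftot _ _ FX1 FX2; [exists X2 | exists X1] => //; split.
Qed.

Section ZornSubset.
Variable T : Type.

Lemma Zorn_bigcup_ge (P : set (set T)) (S0 : set T) : P S0 ->
  (forall F, F `<=` P -> F !=set0 -> total_on F subset ->
     P (\bigcup_(X in F) X)) ->
  exists A, [/\ P A, S0 `<=` A & forall B, A `<` B -> ~ P B].
Proof.
move=> PS0 Pchain.
(* [P'] also holds for [set0], the union of the empty chain. *)
pose P' A := A = set0 \/ P A /\ S0 `<=` A.
have [A [P'A Amax]] : exists A, P' A /\ forall B, A `<` B -> ~ P' B.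
  apply: Zorn_bigcup => F FP' Ftot.
  pose F' := F `&` [set X | P X /\ S0 `<=` X].
  have FF' : \bigcup_(X in F) X = \bigcup_(X in F') X.
    apply/seteqP; split=> [x [X FX Xx]|x [X [FX _] Xx]]; last by exists X.
    by case: (FP' _ FX) => [X0|PX]; [rewrite X0 in Xx | exists X].
  have [[X [FX [PX S0X]]]|F'0] := pselect (F' !=set0); last first.
    left; rewrite FF'; apply/seteqP; split=> // x [X F'X _].
    by apply: F'0; exists X.
  right; rewrite FF'; split; last by move=> x /S0X Xx; exists X.
  apply: Pchain; [by move=> Y [_ []] | by exists X | ].
  by move=> Y Z [FY _] [FZ _]; exact: Ftot.
have S0A : S0 `<=` A.
  case: P'A => [A0|[]//] x S0x; exfalso.
  apply: (Amax S0); last by right; split=> [|y].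
  by rewrite A0; split=> [y []|/(_ x S0x)].
have PA : P A.
  case: P'A => [A0|[]//]; suff -> : A = S0 by [].
  by apply/seteqP; split=> //; rewrite A0.
exists A; split=> // B AB PB; apply: (Amax B AB); right; split=> //.
by apply: subset_trans S0A (properW AB).
Qed.

Definition partial_bij (A C : set T) (R : set (T * T)) := [/\ R `<=` A `*` C,
  forall x y y', R (x, y) -> R (x, y') -> y = y' &
  forall x x' y, R (x, y) -> R (x', y) -> x = x'].

Lemma partial_bij_bigcup (A C : set T) (F : set (set (T * T))) :
  F `<=` partial_bij A C -> total_on F subset ->
  partial_bij A C (\bigcup_(R in F) R).
Proof.
move=> FP Ftot; split.
- by move=> p [R /FP[+ _ _]]; apply.
- move=> x y y' [R1 FR1 R1x] [R2 FR2 R2x].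
  have [R FR [s1 s2]] := total_on_subset_ub Ftot FR1 FR2.
  by have [_ Rf _] := FP _ FR; apply: (Rf x); [apply: s1 | apply: s2].
- move=> x x' y [R1 FR1 R1x] [R2 FR2 R2x].
  have [R FR [s1 s2]] := total_on_subset_ub Ftot FR1 FR2.
  by have [_ _ Ri] := FP _ FR; apply: (Ri _ _ y); [apply: s1 | apply: s2].
Qed.

Lemma partial_bij_setU1 (A C : set T) (R : set (T * T)) (a c : T) :
  partial_bij A C R -> A a -> C c ->
  ~ (exists y, R (a, y)) -> ~ (exists x, R (x, c)) ->
  partial_bij A C (R `|` [set (a, c)]).
Proof.
move=> [RAC Rfun Rinj] Aa Cc na nc; split.
- by move=> p [/RAC//|-> /=].
- move=> x y y' [Rxy|[ex ey]] [Rxy'|[ex' ey']]; subst.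
  + exact: Rfun Rxy Rxy'.
  + by case: na; exists y.
  + by case: na; exists y'.
  + by [].
- move=> x x' y [Rxy|[ex ey]] [Rxy'|[ex' ey']]; subst.
  + exact: Rinj Rxy Rxy'.
  + by case: nc; exists x.
  + by case: nc; exists x'.
  + by [].
Qed.

(* A maximal partial bijection between [A] and [C] is total on [A] or onto [C]. *)
Lemma subset_inj_total (A C : set T) :
  (exists h : T -> T, {in A &, injective h} /\ forall x, A x -> C (h x)) \/
  (exists h : T -> T, {in C &, injective h} /\ forall y, C y -> A (h y)).
Proof.
have [R [[RAC Rfun Rinj] Rmax]] :
    exists R, partial_bij A C R /\ forall B, R `<` B -> ~ partial_bij A C B.
  exact: Zorn_bigcup (fun F FP => partial_bij_bigcup FP).
have [domA|/existsNP[a /not_implyP[Aa na]]] :=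
  pselect (forall x, A x -> exists y, R (x, y)).
  left; have [h Rh] := choice_in id domA; exists h; split.
    move=> x x' /set_mem Ax /set_mem Ax' hx.
    by apply: (Rinj _ _ (h x)); [exact: Rh | rewrite hx; exact: Rh].
  by move=> x Ax; exact: (RAC _ (Rh _ Ax)).2.
have [ranC|/existsNP[c /not_implyP[Cc nc]]] :=
  pselect (forall y, C y -> exists x, R (x, y)).
  right; have [h Rh] := choice_in id ranC; exists h; split.
    move=> y y' /set_mem Cy /set_mem Cy' hy.
    by apply: (Rfun (h y)); [exact: Rh | rewrite hy; exact: Rh].
  by move=> y Cy; exact: (RAC _ (Rh _ Cy)).1.
exfalso; apply: (Rmax (R `|` [set (a, c)])); last exact: partial_bij_setU1.
split; first by move=> p Rp; left.
by move=> /(_ (a, c) (or_intror erefl)) Rac; apply: na; exists c.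
Qed.

End ZornSubset.

Section PairCoding.
Variable T : Type.

Definition code_dom (S : set ((T * T) * T)) : set T :=
  [set x | exists y z, S ((x, y), z)].

(* [S] is the graph of an injection of [code_dom S `*` code_dom S] into
   [code_dom S]. *)
Definition pair_coding (S : set ((T * T) * T)) := [/\
  forall p z z', S (p, z) -> S (p, z') -> z = z',
  forall p p' z, S (p, z) -> S (p', z) -> p = p',
  forall x y, code_dom S x -> code_dom S y -> exists z, S ((x, y), z),
  forall x y z, S ((x, y), z) -> code_dom S y &
  forall p z, S (p, z) -> code_dom S z].

Definition pair_graph (A : set T) (f : T * T -> T) : set ((T * T) * T) :=
  [set q | (A `*` A) q.1 /\ q.2 = f q.1].

Lemma code_dom_sub (S S' : set ((T * T) * T)) :
  S `<=` S' -> code_dom S `<=` code_dom S'.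
Proof. by move=> SS' x [y [z Sxyz]]; exists y, z; apply: SS'. Qed.

Lemma code_dom_graph (A : set T) (f : T * T -> T) :
  A !=set0 -> code_dom (pair_graph A f) = A.
Proof.
move=> [a Aa]; apply/seteqP; split=> [x [y [z [[]]]]//|x Ax].
by exists a, (f (x, a)).
Qed.

Lemma pair_coding_graph (A : set T) (f : T * T -> T) :
  A !=set0 -> (forall p, (A `*` A) p -> A (f p)) -> {in A `*` A &, injective f} ->
  pair_coding (pair_graph A f).
Proof.
move=> A0 fA finj; rewrite /pair_coding code_dom_graph //; split.
- by move=> p z z' [_ /= ->] [_ /= ->].
- move=> p p' z [Ap /= ->] [Ap' /= fp]; exact: finj (mem_set Ap) (mem_set Ap') fp.
- by move=> x y Ax Ay; exists (f (x, y)).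
- by move=> x y z [[]].
- by move=> p z [Ap /= ->]; exact: fA.
Qed.

Lemma pair_coding_bigcup (F : set (set ((T * T) * T))) :
  F `<=` pair_coding -> total_on F subset -> pair_coding (\bigcup_(S in F) S).
Proof.
move=> Fcoding Ftot.
have dom_bigcup S : F S -> code_dom S `<=` code_dom (\bigcup_(S in F) S).
  by move=> FS; apply: code_dom_sub => q Sq; exists S.
split.
- move=> p z z' [S1 FS1 S1z] [S2 FS2 S2z'].
  have [S FS [s1 s2]] := total_on_subset_ub Ftot FS1 FS2.
  by have [Sfun _ _ _ _] := Fcoding _ FS; apply: Sfun (s1 _ S1z) (s2 _ S2z').
- move=> p p' z [S1 FS1 S1p] [S2 FS2 S2p'].
  have [S FS [s1 s2]] := total_on_subset_ub Ftot FS1 FS2.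
  by have [_ Sinj _ _ _] := Fcoding _ FS; apply: Sinj (s1 _ S1p) (s2 _ S2p').
- move=> x y [y1 [z1 [S1 FS1 S1x]]] [y2 [z2 [S2 FS2 S2y]]].
  have [S FS [s1 s2]] := total_on_subset_ub Ftot FS1 FS2.
  have [_ _ Stot _ _] := Fcoding _ FS.
  have [z Sz] : exists z, S ((x, y), z).
    by apply: Stot; [exists y1, z1; apply: s1 | exists y2, z2; apply: s2].
  by exists z, S.
- move=> x y z [S FS Sxyz]; apply: (dom_bigcup _ FS).
  by have [_ _ _ Sdom2 _] := Fcoding _ FS; exact: Sdom2 Sxyz.
- move=> p z [S FS Spz]; apply: (dom_bigcup _ FS).
  by have [_ _ _ _ Sdom] := Fcoding _ FS; exact: Sdom Spz.
Qed.

Lemma pair_coding_fun (S : set ((T * T) * T)) : pair_coding S ->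
  let A := code_dom S in exists f : T * T -> T, [/\
    forall p, (A `*` A) p -> S (p, f p),
    forall p, (A `*` A) p -> A (f p) &
    {in A `*` A &, injective f}].
Proof.
move=> [Sfun Sinj Stot Sdom2 Sdom] A.
have [f fS] : exists f : T * T -> T, forall p, (A `*` A) p -> S (p, f p).
  apply: (choice_in (fun p => p.1) (Q := A `*` A) (R := fun p z => S (p, z))).
  by move=> [x y] [Ax Ay]; exact: Stot.
exists f; split=> [p Ap|p Ap|p p' /set_mem Ap /set_mem Ap' fp]; first exact: fS.
  exact: Sdom (fS _ Ap).
by apply: (Sinj _ _ (f p)); [exact: fS | rewrite fp; exact: fS].
Qed.

Lemma setU_inj_into (A B : set T) (f : T * T -> T) (g : T -> T) (a0 a1 : T) :
  (forall p, (A `*` A) p -> A (f p)) -> {in A `*` A &, injective f} ->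
  {in B &, injective g} -> (forall x, B x -> A (g x)) ->
  A a0 -> A a1 -> a0 <> a1 ->
  exists e : T -> T, {in A `|` B &, injective e} /\ forall x, (A `|` B) x -> A (e x).
Proof.
move=> fA finj ginj gA Aa0 Aa1 a01.
have f_inj x y x' y' : A x -> A y -> A x' -> A y' -> f (x, y) = f (x', y') ->
    x = x' /\ y = y'.
  by move=> Ax Ay Ax' Ay' /(finj _ _ (mem_set (conj Ax Ay)) (mem_set (conj Ax' Ay'))) [].
pose e x := if pselect (A x) is left _ then f (x, a0) else f (g x, a1).
have eA x : (A `|` B) x -> A (e x).
  by rewrite /e; case: pselect => [Ax _|_ [//|Bx]]; apply: fA; split=> //; exact: gA.
exists e; split=> // x x' /set_mem ABx /set_mem ABx'; rewrite /e.
case: pselect => Ax; case: pselect => Ax'.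
- by case/f_inj.
- by case: ABx' => // /gA gx' /f_inj[] // _ /a01.
- by case: ABx => // /gA gx /f_inj[] // _ /esym/a01.
- case: ABx => // Bx; case: ABx' => // Bx' /f_inj[] //; try exact: gA.
  by move=> gx _; exact: ginj (mem_set Bx) (mem_set Bx') gx.
Qed.

(* On [(A `|` h @` A) `*` (A `|` h @` A)] minus [A `*` A], use
   [(x, y) |-> h (f (e x, e y))], with [e] embedding [A `|` h @` A] into [A]. *)
Lemma square_inj_extend (A : set T) (f : T * T -> T) (h : T -> T) (a0 a1 : T) :
  (forall p, (A `*` A) p -> A (f p)) -> {in A `*` A &, injective f} ->
  {in A &, injective h} -> (forall x, A x -> ~ A (h x)) ->
  A a0 -> A a1 -> a0 <> a1 ->
  let A' := A `|` h @` A in exists F : T * T -> T, [/\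
    forall p, (A `*` A) p -> F p = f p,
    forall p, (A' `*` A') p -> A' (F p) &
    {in A' `*` A' &, injective F}].
Proof.
move=> fA finj hinj hA Aa0 Aa1 a01 A'.
have [hinv hinvK] : exists hinv : T -> T,
    forall y, (h @` A) y -> A (hinv y) /\ h (hinv y) = y.
  apply: (choice_in id (Q := h @` A) (R := fun y x => A x /\ h x = y)).
  by move=> _ [x Ax <-]; exists x.
have [e [einj eA]] : exists e : T -> T,
    {in A' &, injective e} /\ forall x, A' x -> A (e x).
  apply: setU_inj_into fA finj _ (fun y By => (hinvK y By).1) Aa0 Aa1 a01.
  move=> y y' /set_mem By /set_mem By' hy.
  by rewrite -(hinvK _ By).2 -(hinvK _ By').2 hy.
have eAA q : (A' `*` A') q -> (A `*` A) (e q.1, e q.2) by move=> [] /eA ? /eA ?.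
exists (fun p => if pselect ((A `*` A) p) is left _ then f p
  else h (f (e p.1, e p.2))); split.
- by move=> p Ap; case: pselect.
- move=> p A'p; case: pselect => [Ap|_]; first by left; exact: fA.
  by right; exists (f (e p.1, e p.2)) => //; exact/fA/eAA.
move=> p p' /set_mem A'p /set_mem A'p'.
case: pselect => Ap; case: pselect => Ap'.
- by apply: finj; exact: mem_set.
- by move=> fp; case: (hA _ (fA _ (eAA _ A'p'))); rewrite -fp; exact: fA.
- by move=> fp; case: (hA _ (fA _ (eAA _ A'p))); rewrite fp; exact: fA.
move=> /(hinj _ _ (mem_set (fA _ (eAA _ A'p))) (mem_set (fA _ (eAA _ A'p')))).
move=> /(finj _ _ (mem_set (eAA _ A'p)) (mem_set (eAA _ A'p'))) [].
case: p p' A'p A'p' {Ap Ap'} => [x y] [x' y'] [/= A'x A'y] [/= A'x' A'y'].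
move=> /(einj _ _ (mem_set A'x) (mem_set A'x')) ->.
by move=> /(einj _ _ (mem_set A'y) (mem_set A'y')) ->.
Qed.

Lemma pair_coding_extend (S : set ((T * T) * T)) (h : T -> T) (a0 a1 : T) :
  pair_coding S -> let A := code_dom S in
  A a0 -> A a1 -> a0 <> a1 ->
  {in A &, injective h} -> (forall x, A x -> ~ A (h x)) ->
  exists2 S', S `<` S' & pair_coding S'.
Proof.
move=> Scoding A Aa0 Aa1 a01 hinj hA.
have [f [fS fA finj]] := pair_coding_fun Scoding.
have [F [Ff FA' Finj]] := square_inj_extend fA finj hinj hA Aa0 Aa1 a01.
set A' := A `|` h @` A in FA' Finj.
have SA p z : S (p, z) -> (A `*` A) p.
  case: Scoding p => _ _ _ Sdom2 _ [x y] Sxyz.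
  by split; [exists y, z | exact: Sdom2 Sxyz].
exists (pair_graph A' F); last first.
  by apply: pair_coding_graph => //; exists a0; left.
split.
  move=> [p z] Spz; have Ap := SA _ _ Spz; split; first by split; left; case: Ap.
  rewrite /= Ff //; case: Scoding => Sfun _ _ _ _; exact: Sfun Spz (fS _ Ap).
move=> /(_ ((h a0, h a0), F (h a0, h a0))) SF.
have A'ha0 : A' (h a0) by right; exists a0.
by have [Aha0 _] := SA _ _ (SF (conj (conj A'ha0 A'ha0) erefl)); exact: hA Aha0.
Qed.

Lemma pair_coding_nat (e : nat -> T) :
  injective e -> exists2 S0, pair_coding S0 & range e `<=` code_dom S0.
Proof.
move=> einj; have [einv einvK] := injective_linv 0%N einj.
pose S0 := pair_graph (range e) (fun p => e (pickle (einv p.1, einv p.2))).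
exists S0; last by rewrite code_dom_graph //; exists (e 0%N), 0%N.
apply: pair_coding_graph; first by exists (e 0%N), 0%N.
  by move=> p _; exists (pickle (einv p.1, einv p.2)).
move=> [x y] [x' y'] /set_mem/= [[m _ <-] [n _ <-]] /set_mem/= [[m' _ <-] [n' _ <-]].
by move=> /einj /(pcan_inj (@pickleK _)); rewrite !einvK => -[-> ->].
Qed.

End PairCoding.

(* Zorn gives a maximal injection [f] of [A `*` A] into [A] (with [A] infinite).
   If [A] were smaller than its complement, [f] could be extended to
   [A `|` h @` A]; hence [~` A] embeds in [A] and [K * K] embeds in [A `*` A]. *)
Lemma infinite_square_inj (K : Type) :
  infinite_set [set: K] -> exists p : K * K -> K, injective p.
Proof.
move=> /infinite_nat_inj [e einj].
have [S0 S0coding eS0] := pair_coding_nat einj.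
have [S [Scoding S0S Smax]] :=
  Zorn_bigcup_ge S0coding (fun F FP _ => pair_coding_bigcup FP).
pose A := code_dom S.
have eA n : A (e n) by apply/(code_dom_sub S0S)/eS0; exists n.
have e01 : e 0%N <> e 1%N by move/einj.
have [f [_ fA finj]] := pair_coding_fun Scoding.
have [[h [hinj hA]]|[h [hinj hA]]] := subset_inj_total A (~` A).
  by have [S' /Smax] := pair_coding_extend Scoding (eA 0%N) (eA 1%N) e01 hinj hA.
have [g [ginj gA]] := setU_inj_into fA finj hinj hA (eA 0%N) (eA 1%N) e01.
have AAc u : u \in A `|` ~` A.
  by apply: mem_set; have [] := pselect (A u); [left | right].
have gAA u v : (A `*` A) (g u, g v) by split; apply/gA/set_mem/AAc.
exists (fun p => f (g p.1, g p.2)) => -[x y] [x' y'] /=.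
move=> /(finj _ _ (mem_set (gAA x y)) (mem_set (gAA x' y'))) [].
move=> /(ginj _ _ (AAc x) (AAc x')) ->.
by move=> /(ginj _ _ (AAc y) (AAc y')) ->.
Qed.

(* [A] has at most |K| elements; unlike [A #<= [set: K]], this fails for
   [A = set0] in an empty type [T] when [K] is inhabited. *)
Definition small (K T : Type) (A : set T) := exists f : K -> T, A `<=` range f.

Section Small.
Variable K : Type.
Hypothesis Kinf : infinite_set [set: K].

Let K_inhabited : exists k : K, True.
Proof. by have [e _] := infinite_nat_inj Kinf; exists (e 0%N). Qed.

Lemma card_le_small T (t0 : T) (A : set T) : (A #<= [set: K])%card -> small K A.
Proof.
case/pfcard_geP => [->|/surjfunPex [f ->]]; first by exists (fun _ => t0).
by exists f => _ [k _ <-]; exists k.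
Qed.

Lemma small_card_le T (A : set T) : small K A -> (A #<= [set: K])%card.
Proof.
case=> f Af; apply/pfcard_geP.
have [[a0 Aa0]|A0] := pselect (A !=set0); last first.
  by left; apply/seteqP; split=> // a Aa; apply: A0; exists a.
right; apply/surjfunPex.
exists (fun k => if pselect (A (f k)) is left _ then f k else a0).
apply/seteqP; split; last by move=> _ [k _ <-]; case: pselect.
move=> a Aa; case: (Af _ Aa) => k _ fk; exists k => //.
by case: pselect => //; rewrite fk.
Qed.

Lemma sub_small T (A B : set T) : A `<=` B -> small K B -> small K A.
Proof. by move=> AB [f Bf]; exists f => a /AB /Bf. Qed.

Lemma small_image T U (g : T -> U) (A : set T) : small K A -> small K (g @` A).
Proof. by case=> f Af; exists (g \o f) => _ [a /Af [k _ <-] <-]; exists k. Qed.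

Lemma small_set1 T (t : T) : small K [set t].
Proof. by have [k0 _] := K_inhabited; exists (fun _ => t) => _ ->; exists k0. Qed.

Lemma small_bigcup T I (t0 : T) (D : set I) (F : I -> set T) :
  small K D -> (forall i, D i -> small K (F i)) -> small K (\bigcup_(i in D) F i).
Proof.
move=> [fD Dsub] Fsmall.
have [p pinj] := infinite_square_inj Kinf.
have [k0 _] := K_inhabited.
have [unp unpK] := injective_linv (k0, k0) pinj.
have [fam famP] := choice_in (fun _ _ => t0) Fsmall.
exists (fun k => fam (fD (unp k).1) (unp k).2) => t [i Di Fit].
have [a _ fDa] := Dsub _ Di; have [b _ famb] := famP _ Di _ Fit.
by exists (p (a, b)) => //; rewrite unpK /= fDa.
Qed.

Lemma small_bigcup_nat T (t0 : T) (F : nat -> set T) :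
  (forall n, small K (F n)) -> small K (\bigcup_n F n).
Proof.
move=> Fsmall; have [e einj] := infinite_nat_inj Kinf.
have [un unK] := injective_linv 0%N einj.
have natK : small K [set: nat] by exists un => n _; exists (e n).
by apply: (small_bigcup t0 natK) => n _; exact: Fsmall.
Qed.

Lemma small_setU T (t0 : T) (A B : set T) : small K A -> small K B -> small K (A `|` B).
Proof.
move=> sA sB; apply: (@sub_small _ _ (\bigcup_n (if n is 0%N then A else B))).
  by move=> t [At|Bt]; [exists 0%N | exists 1%N].
by apply: (small_bigcup_nat t0) => -[|n].
Qed.

End Small.

Definition group_laws (T : Type) (mul : T -> T -> T) (inv : T -> T) (one : T) :=
  [/\ forall a b c, mul a (mul b c) = mul (mul a b) c,
      forall a, mul one a = a /\ mul a one = a &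
      forall a, mul (inv a) a = one /\ mul a (inv a) = one].

Lemma topgroup_laws (G : topologicalType) (mul : G -> G -> G) (inv : G -> G)
    (one : G) :
  is_topgroup mul inv one -> group_laws mul inv one.
Proof. by case. Qed.

Section GroupLaws.
Variables (T : Type) (mul : T -> T -> T) (inv : T -> T) (one : T).
Hypothesis gl : group_laws mul inv one.

Lemma law_mulgA a b c : mul a (mul b c) = mul (mul a b) c.
Proof. by case: gl. Qed.
Lemma law_mul1g a : mul one a = a. Proof. by case: gl => _ /(_ a)[]. Qed.
Lemma law_mulg1 a : mul a one = a. Proof. by case: gl => _ /(_ a)[]. Qed.
Lemma law_mulVg a : mul (inv a) a = one. Proof. by case: gl => _ _ /(_ a)[]. Qed.
Lemma law_mulgV a : mul a (inv a) = one. Proof. by case: gl => _ _ /(_ a)[]. Qed.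

Lemma law_mulKg a b : mul (inv a) (mul a b) = b.
Proof. by rewrite law_mulgA law_mulVg law_mul1g. Qed.
Lemma law_mulKVg a b : mul a (mul (inv a) b) = b.
Proof. by rewrite law_mulgA law_mulgV law_mul1g. Qed.
Lemma law_mulgI a b c : mul a b = mul a c -> b = c.
Proof. by move=> E; rewrite -(law_mulKg a b) E law_mulKg. Qed.
Lemma law_invgK a : inv (inv a) = a.
Proof. by apply: (@law_mulgI (inv a)); rewrite law_mulgV law_mulVg. Qed.
Lemma law_invMg a b : inv (mul a b) = mul (inv b) (inv a).
Proof.
apply: (@law_mulgI (mul a b)).
by rewrite law_mulgV -law_mulgA (law_mulgA b) law_mulgV law_mul1g law_mulgV.
Qed.
Lemma law_invg1 : inv one = one.
Proof. by rewrite -{2}(law_mulVg one) law_mulg1. Qed.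

End GroupLaws.

Lemma nbhs_pair (T U : topologicalType) (a : T) (b : U) (W : set (T * U)) :
  nbhs (a, b) W -> exists A B, [/\ nbhs a A, nbhs b B &
    forall x y, A x -> B y -> W (x, y)].
Proof.
case=> -[A B] /= [nA nB] AB_W; exists A, B; split=> // x y Ax By.
exact: AB_W.
Qed.

Section TopologicalGroup.
Variables (G : topologicalType) (mul : G -> G -> G) (inv : G -> G) (one : G).
Hypothesis tg : is_topgroup mul inv one.

Let gl := topgroup_laws tg.

Lemma nbhs_mul2 a b U : nbhs (mul a b) U -> exists A B, [/\ nbhs a A, nbhs b B &
    forall x y, A x -> B y -> U (mul x y)].
Proof.
have [_ _ _ cmul _] := tg.
by move=> /(cmul (a, b)) /nbhs_pair [A [B [nA nB AB_U]]]; exists A, B.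
Qed.

Lemma nbhs_one_mul U : nbhs one U -> exists2 V, nbhs one V &
  forall a b, V a -> V b -> U (mul a b).
Proof.
rewrite -{1}(law_mul1g gl one) => /nbhs_mul2 [A [B [nA nB AB_U]]].
by exists (A `&` B); [exact: filterI | move=> a b [Aa _] [_ Bb]; exact: AB_U].
Qed.

Lemma nbhs_one_mul3 U : nbhs one U -> exists2 V, nbhs one V &
  forall a b c, V a -> V b -> V c -> U (mul (mul a b) c).
Proof.
move=> /nbhs_one_mul [V1 nV1 V1_U]; have [V2 nV2 V2_V1] := nbhs_one_mul nV1.
exists (V1 `&` V2); first exact: filterI.
by move=> a b c [_ ?] [_ ?] [? _]; apply: V1_U => //; exact: V2_V1.
Qed.

Lemma nbhs_one_inv U : nbhs one U -> nbhs one [set a | U (inv a)].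
Proof.
have [_ _ _ _ cinv] := tg.
by rewrite -{1}(law_invg1 gl) => /(cinv one).
Qed.

Lemma nbhs_lmul c w U : nbhs (mul c w) U -> nbhs w [set w' | U (mul c w')].
Proof.
case/nbhs_mul2 => A [B [nA nB AB_U]].
by apply: filterS nB => w' Bw'; apply: AB_U => //; exact: nbhs_singleton.
Qed.

Lemma nbhs_rmul c w U : nbhs (mul w c) U -> nbhs w [set w' | U (mul w' c)].
Proof.
case/nbhs_mul2 => A [B [nA nB AB_U]].
by apply: filterS nA => w' Aw'; apply: AB_U => //; exact: nbhs_singleton.
Qed.

Lemma nbhs_one_conj c U :
  nbhs one U -> nbhs one [set w | U (mul (mul c w) (inv c))].
Proof.
move=> nU; apply: (nbhs_lmul (U := [set y | U (mul y (inv c))])).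
rewrite (law_mulg1 gl); apply: nbhs_rmul.
by rewrite (law_mulgV gl).
Qed.

End TopologicalGroup.

(* The Pontryagin conditions: together with [forall U, F U -> U one], they
   make [F] a base at the unit of a group topology. *)
Definition group_base (T : Type) (mul : T -> T -> T) (inv : T -> T)
    (F : set (set T)) := [/\
  forall U, F U -> exists2 V, F V & forall a b, V a -> V b -> U (mul a b),
  forall U, F U -> exists2 V, F V & forall a, V a -> U (inv a),
  forall U x, F U -> exists2 V, F V & forall v, V v -> U (mul (mul x v) (inv x)) &
  forall U V, F U -> F V -> F (U `&` V)].

Lemma iter_inflationary T (step : set T -> set T) (S0 : set T) :
  (forall A, A `<=` step A) ->
  {homo (fun n => iter n step S0) : n m / (n <= m)%N >-> n `<=` m}.
Proof.
move=> stepS n m /subnK <-; elim: (m - n)%N => [//|k IH] x /IH.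
by rewrite addSn; exact: stepS.
Qed.

Definition closure_step (T : Type) (inv : T -> T) (half : set T -> set T)
    (conjs : set T -> set (set T)) (A : set (set T)) :=
  A `|` half @` A `|` (fun U => [set a | U (inv a)]) @` A
  `|` \bigcup_(U in A) conjs U `|` \bigcup_(U in A) (setI U) @` A.

Section BaseClosure.
Variables (K : Type) (G : topologicalType) (mul : G -> G -> G) (inv : G -> G)
  (one : G).
Hypotheses (Kinf : infinite_set [set: K]) (tg : is_topgroup mul inv one).
Variables (half : set G -> set G) (conjs : set G -> set (set G)).
Hypothesis halfP : forall U, nbhs one U ->
  nbhs one (half U) /\ forall a b, half U a -> half U b -> U (mul a b).
Hypothesis conjsP : forall U, nbhs one U -> [/\
  small K (conjs U), forall V, conjs U V -> nbhs one V &
  forall x, exists2 V, conjs U V & forall v, V v -> U (mul (mul x v) (inv x))].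
Variable S0 : set (set G).
Hypotheses (S0small : small K S0) (S0nbhs : forall U, S0 U -> nbhs one U).

Local Notation step := (closure_step inv half conjs).
Local Notation fam n := (iter n step S0).

Let famS n : fam n.+1 = step (fam n). Proof. by []. Qed.

Lemma closure_nbhs n U : fam n U -> nbhs one U.
Proof.
elim: n U => [|n IH] U; first exact: S0nbhs.
rewrite famS => -[[[[/IH//|[V /IH /halfP[nV _] <-//]]|]|]|].
- by move=> [V /IH nV <-]; exact: (nbhs_one_inv tg).
- by move=> [V /IH /conjsP[_ conjs_nbhs _]]; exact: conjs_nbhs.
- by move=> [V /IH nV [W /IH nW <-]]; exact: filterI.
Qed.

Lemma closure_small : small K (\bigcup_n fam n).
Proof.
apply: (small_bigcup_nat Kinf setT); elim=> [//|n IH]; rewrite famS.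
apply: (small_setU Kinf setT).
  apply: (small_setU Kinf setT); last first.
    by apply: (small_bigcup Kinf setT) => // V /closure_nbhs /conjsP[].
  apply: (small_setU Kinf setT); last exact: small_image.
  by apply: (small_setU Kinf setT) => //; exact: small_image.
by apply: (small_bigcup Kinf setT) => // V _; exact: small_image.
Qed.

Lemma closure_group_base : group_base mul inv (\bigcup_n fam n).
Proof.
have fam_mono := @iter_inflationary _ step S0 (fun A U AU => or_introl
  (or_introl (or_introl (or_introl AU)))).
split.
- move=> U [n _ fU]; exists (half U); last by case: (halfP (closure_nbhs fU)).
  by exists n.+1 => //; rewrite famS; do 3 left; right; exists U.
- move=> U [n _ fU]; exists [set a | U (inv a)] => //.
  by exists n.+1 => //; rewrite famS; do 2 left; right; exists U.
- move=> U x [n _ fU]; have [_ _ /(_ x) [V gV V_U]] := conjsP (closure_nbhs fU).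
  by exists V => //; exists n.+1 => //; rewrite famS; left; right; exists U.
- move=> U V [n _ fU] [m _ fV]; exists (maxn n m).+1 => //; rewrite famS; right.
  exists U; first exact: (fam_mono n) (leq_maxl _ _) _ fU.
  by exists V => //; exact: (fam_mono m) (leq_maxr _ _) _ fV.
Qed.

End BaseClosure.

Lemma group_base_closure (K : Type) (G : topologicalType) (mul : G -> G -> G)
    (inv : G -> G) (one : G) (S0 : set (set G)) :
  infinite_set [set: K] -> is_topgroup mul inv one -> balanced mul inv one K ->
  small K S0 -> (forall U, S0 U -> nbhs one U) -> exists F : set (set G),
    [/\ S0 `<=` F, small K F, (forall U, F U -> nbhs one U) & group_base mul inv F].
Proof.
move=> Kinf tg bal S0small S0nbhs.
have [|half halfP] := @choice_in _ _ id (nbhs one)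
    (fun U V => nbhs one V /\ forall a b, V a -> V b -> U (mul a b)).
  by move=> U /(nbhs_one_mul tg) [V nV VV_U]; exists V.
have [|conjs conjsP] := @choice_in _ _ (fun _ => set0) (nbhs one)
    (fun U g => [/\ small K g, forall V, g V -> nbhs one V &
       forall x, exists2 V, g V & forall v, V v -> U (mul (mul x v) (inv x))]).
  move=> U /bal [g [gK [gnbhs gconj]]].
  by exists g; split=> //; exact: (card_le_small (T := set G) setT gK).
exists (\bigcup_n iter n (closure_step inv half conjs) S0); split.
- by move=> U S0U; exists 0%N.
- exact: (closure_small Kinf tg halfP conjsP S0small S0nbhs).
- by move=> U [n _]; exact: (closure_nbhs tg halfP conjsP S0nbhs).
- exact: (closure_group_base tg halfP conjsP S0nbhs).
Qed.

Record based_group := BasedGroup {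
  bg_sort : choiceType;
  bg_mul : bg_sort -> bg_sort -> bg_sort;
  bg_inv : bg_sort -> bg_sort;
  bg_one : bg_sort;
  bg_laws : group_laws bg_mul bg_inv bg_one;
  bg_base : set (set bg_sort);
  bg_baseT : bg_base setT;
  bg_base_one : forall U, bg_base U -> U bg_one;
  bg_base_group : group_base bg_mul bg_inv bg_base }.

Section BaseKernel.
Variable B : based_group.
Local Notation T := (bg_sort B).
Local Notation mul := (@bg_mul B).
Local Notation inv := (@bg_inv B).
Local Notation one := (@bg_one B).
Local Notation F := (@bg_base B).
Let gl := bg_laws B.

Lemma base_mul U : F U -> exists2 V, F V & forall a b, V a -> V b -> U (mul a b).
Proof. by case: (bg_base_group B) => + _ _ _; apply. Qed.
Lemma base_inv U : F U -> exists2 V, F V & forall a, V a -> U (inv a).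
Proof. by case: (bg_base_group B) => _ + _ _; apply. Qed.
Lemma base_conj U x : F U -> exists2 V, F V & forall v, V v -> U (mul (mul x v) (inv x)).
Proof. by case: (bg_base_group B) => _ _ + _; apply. Qed.
Lemma base_setI U V : F U -> F V -> F (U `&` V).
Proof. by case: (bg_base_group B) => _ _ _; apply. Qed.

Lemma base_mul3 U : F U ->
  exists2 V, F V & forall a b c, V a -> V b -> V c -> U (mul (mul a b) c).
Proof.
move=> /base_mul [V1 FV1 V1_U]; have [V2 FV2 V2_V1] := base_mul FV1.
exists (V1 `&` V2); first exact: base_setI.
by move=> a b c [_ ?] [_ ?] [? _]; apply: V1_U => //; exact: V2_V1.
Qed.

Lemma base_mulV U : F U -> exists2 V, F V & forall a b, V a -> V b -> U (mul a (inv b)).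
Proof.
move=> /base_mul [V1 FV1 V1_U]; have [V2 FV2 V2_V1] := base_inv FV1.
exists (V1 `&` V2); first exact: base_setI.
by move=> a b [? _] [_ ?]; apply: V1_U => //; exact: V2_V1.
Qed.

Definition base_kernel x := forall U, F U -> U x.

Lemma base_kernel1 : base_kernel one. Proof. by move=> U /bg_base_one. Qed.

Lemma base_kernelM a b : base_kernel a -> base_kernel b -> base_kernel (mul a b).
Proof. by move=> Na Nb U /base_mul [V FV VV_U]; apply: VV_U; [exact: Na | exact: Nb]. Qed.

Lemma base_kernelV a : base_kernel a -> base_kernel (inv a).
Proof. by move=> Na U /base_inv [V FV V_U]; apply: V_U; exact: Na. Qed.

Lemma base_kernelJ x a : base_kernel a -> base_kernel (mul (mul x a) (inv x)).
Proof. by move=> Na U /(base_conj x) [V FV V_U]; apply: V_U; exact: Na. Qed.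

Definition base_eq a b := base_kernel (mul (inv a) b).

Lemma base_eq_refl a : base_eq a a.
Proof. by rewrite /base_eq (law_mulVg gl); exact: base_kernel1. Qed.

Lemma base_eq_sym a b : base_eq a b -> base_eq b a.
Proof. by move=> /base_kernelV; rewrite /base_eq (law_invMg gl) (law_invgK gl). Qed.

Lemma base_eq_trans a b c : base_eq a b -> base_eq b c -> base_eq a c.
Proof.
by move=> ab /(base_kernelM ab); rewrite /base_eq -(law_mulgA gl) (law_mulKVg gl).
Qed.

Lemma base_eqM a a' b b' : base_eq a a' -> base_eq b b' -> base_eq (mul a b) (mul a' b').
Proof.
move=> aa /(base_kernelM (base_kernelJ (inv b) aa)).
rewrite /base_eq (law_invMg gl) (law_invgK gl) -!(law_mulgA gl) (law_mulKVg gl).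
by rewrite !(law_mulgA gl).
Qed.

Lemma base_eq_ball U : F U -> exists2 V, F V & forall x x' y y',
  base_eq x x' -> base_eq y y' -> V (mul (inv x) y) -> U (mul (inv x') y').
Proof.
move=> /base_mul3 [V FV VVV_U]; exists V => // x x' y y' xx yy Vxy.
have -> : mul (inv x') y' = mul (mul (mul (inv x') x) (mul (inv x) y)) (mul (inv y) y').
  by rewrite -!(law_mulgA gl) !(law_mulKVg gl).
by apply: VVV_U => //; [exact: base_eq_sym | exact: yy].
Qed.

Definition base_repr a := xget one (base_eq a).

Lemma base_reprP a : base_eq a (base_repr a).
Proof. exact: xgetI (base_eq_refl a). Qed.

Lemma base_repr_eq a b : base_eq a b -> base_repr a = base_repr b.
Proof.
move=> ab; rewrite /base_repr; congr xget.
apply/funext => c; apply/propext; split; last exact: base_eq_trans.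
exact: base_eq_trans (base_eq_sym ab).
Qed.

Lemma base_repr_idem a : base_repr (base_repr a) = base_repr a.
Proof. by apply/esym/base_repr_eq; exact: base_reprP. Qed.

End BaseKernel.

(* The quotient by [base_kernel B], as the set of canonical representatives. *)
Definition quot (B : based_group) := {a : bg_sort B | base_repr a = a}.
HB.instance Definition _ B := gen_eqMixin (quot B).
HB.instance Definition _ B := gen_choiceMixin (quot B).

Definition quot_pi (B : based_group) (a : bg_sort B) : quot B :=
  exist _ (base_repr a) (base_repr_idem a).

Definition quot_rel (B : based_group) (U : set (bg_sort B)) : set (quot B * quot B) :=
  [set p | U (bg_mul (bg_inv (sval p.1)) (sval p.2))].

Definition quot_ent (B : based_group) : set_system (quot B * quot B) :=
  [set E | exists2 U, bg_base U & quot_rel U `<=` E].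

Section QuotientUniformity.
Variable B : based_group.
Let gl := bg_laws B.

Lemma quot_ent_filter : Filter (@quot_ent B).
Proof.
split; first by exists setT => //; exact: bg_baseT.
- move=> E1 E2 [U1 FU1 U1E1] [U2 FU2 U2E2]; exists (U1 `&` U2).
    exact: base_setI.
  by move=> p [? ?]; split; [exact: U1E1 | exact: U2E2].
- by move=> P Q PQ [U FU UP]; exists U => // p /UP /PQ.
Qed.

Local Open Scope relation_scope.

Lemma quot_ent_diag A : @quot_ent B A -> diagonal `<=` A.
Proof.
case=> U FU UA [x y]; rewrite /diagonal /= => <-; apply: UA.
rewrite /quot_rel /= (law_mulVg gl).
exact: bg_base_one.
Qed.

Lemma quot_ent_inv A : @quot_ent B A -> @quot_ent B A^-1.
Proof.
case=> U FU UA; have [V FV V_U] := base_inv FU; exists V => // -[x y] /= Vxy.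
by apply: UA; have := V_U _ Vxy; rewrite /quot_rel /= (law_invMg gl) (law_invgK gl).
Qed.

Lemma quot_ent_split A : @quot_ent B A -> exists2 C, @quot_ent B C & C \; C `<=` A.
Proof.
case=> U FU UA; have [V FV VV_U] := base_mul FU.
exists (quot_rel V); first by exists V.
move=> [x z] [y /= Vxy Vyz]; apply: UA.
by have := VV_U _ _ Vxy Vyz; rewrite /quot_rel /= -(law_mulgA gl) (law_mulKVg gl).
Qed.

End QuotientUniformity.

HB.instance Definition _ B := @isUniform.Build (quot B) (@quot_ent B)
  (quot_ent_filter B) (@quot_ent_diag B) (@quot_ent_inv B) (@quot_ent_split B).

Section QuotientGroup.
Variable B : based_group.
Local Notation T := (bg_sort B).
Local Notation mul := (@bg_mul B).
Local Notation inv := (@bg_inv B).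
Local Notation one := (@bg_one B).
Local Notation F := (@bg_base B).
Local Notation H := (quot B).
Let gl := bg_laws B.

Definition quot_ball (h : H) (U : set T) : set H :=
  [set q | U (mul (inv (sval h)) (sval q))].

Lemma nbhs_quotP (h : H) (W : set H) :
  nbhs h W <-> exists2 U, F U & quot_ball h U `<=` W.
Proof.
rewrite -nbhs_entourageE; split.
  by case=> E [U FU UE] EW; exists U => // q Uq; apply/EW/xsectionP/UE.
case=> U FU UW; exists (quot_rel U); first by exists U.
by move=> q /xsectionP; exact: UW.
Qed.

Lemma nbhs_quot_ball h U : F U -> nbhs h (quot_ball h U).
Proof. by move=> FU; apply/nbhs_quotP; exists U. Qed.

Lemma quot_piP a : base_eq a (sval (@quot_pi B a)).
Proof. exact: base_reprP. Qed.

Lemma quot_pi_sval (h : H) : quot_pi (sval h) = h.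
Proof. by case: h => a ra; apply: eq_exist. Qed.

Lemma quot_pi_eq a b : base_eq a b -> @quot_pi B a = quot_pi b.
Proof. by move=> ab; apply: eq_exist; exact: base_repr_eq. Qed.

Lemma quot_sval_eq (h1 h2 : H) : base_eq (sval h1) (sval h2) -> h1 = h2.
Proof. by rewrite -{2}(quot_pi_sval h1) -{2}(quot_pi_sval h2); exact: quot_pi_eq. Qed.

Definition quot_mul (h1 h2 : H) : H := quot_pi (mul (sval h1) (sval h2)).
Definition quot_inv (h : H) : H := quot_pi (inv (sval h)).
Definition quot_one : H := quot_pi one.

Lemma quot_laws : group_laws quot_mul quot_inv quot_one.
Proof.
have eq_l a b c : base_eq a b -> base_eq (mul a c) (mul b c).
  by move=> ab; apply: base_eqM ab (base_eq_refl c).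
have eq_r a b c : base_eq a b -> base_eq (mul c a) (mul c b).
  exact: base_eqM (base_eq_refl c).
have piK a := base_eq_sym (quot_piP a).
split.
- move=> a b c; apply: quot_pi_eq.
  apply: (base_eq_trans (eq_r _ _ _ (piK _))); rewrite (law_mulgA gl).
  exact: eq_l (quot_piP _).
- move=> a; split; rewrite -[RHS]quot_pi_sval; apply: quot_pi_eq.
    by rewrite -{2}(law_mul1g gl (sval a)); exact: eq_l (piK _).
  by rewrite -{2}(law_mulg1 gl (sval a)); exact: eq_r (piK _).
- move=> a; split; apply: quot_pi_eq.
    by rewrite -(law_mulVg gl (sval a)); exact: eq_l (piK _).
  by rewrite -(law_mulgV gl (sval a)); exact: eq_r (piK _).
Qed.

Lemma quot_mul_continuous : continuous (fun p : H * H => quot_mul p.1 p.2).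
Proof.
move=> [p q] W /= /nbhs_quotP [U FU UW].
have [V0 FV0 V0_U] := base_eq_ball FU.
have [V1 FV1 V1V1_V0] := base_mul FV0.
have [V2 FV2 V2_V1] := base_conj (inv (sval q)) FV1.
exists (quot_ball p V2, quot_ball q V1).
  by split; exact: nbhs_quot_ball.
move=> [p' q'] /= [V2p' V1q']; apply: UW.
apply: (V0_U (mul (sval p) (sval q)) _ (mul (sval p') (sval q'))); try exact: quot_piP.
have -> : mul (inv (mul (sval p) (sval q))) (mul (sval p') (sval q')) =
    mul (mul (mul (inv (sval q)) (mul (inv (sval p)) (sval p'))) (inv (inv (sval q))))
      (mul (inv (sval q)) (sval q')).
  by rewrite (law_invMg gl) (law_invgK gl) -!(law_mulgA gl) (law_mulKVg gl).
by apply: V1V1_V0 => //; exact: V2_V1.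
Qed.

Lemma quot_inv_continuous : continuous quot_inv.
Proof.
move=> p W /nbhs_quotP [U FU UW].
have [V0 FV0 V0_U] := base_eq_ball FU.
have [V1 FV1 V1_V0] := base_conj (sval p) FV0.
have [V2 FV2 V2_V1] := base_inv FV1.
apply/nbhs_quotP; exists V2 => // p' V2p'; apply: UW.
apply: (V0_U (inv (sval p)) _ (inv (sval p'))); try exact: quot_piP.
have -> : mul (inv (inv (sval p))) (inv (sval p')) =
    mul (mul (sval p) (inv (mul (inv (sval p)) (sval p')))) (inv (sval p)).
  rewrite (law_invMg gl) !(law_invgK gl) -!(law_mulgA gl).
  by rewrite (law_mulgV gl) (law_mulg1 gl).
by apply: V1_V0; exact: V2_V1.
Qed.

Lemma quot_topgroup : is_topgroup quot_mul quot_inv quot_one.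
Proof.
have [mulA mul1 mulV] := quot_laws.
by split=> //; [exact: quot_mul_continuous | exact: quot_inv_continuous].
Qed.

Lemma quot_hausdorff : hausdorff_space H.
Proof.
move=> p q pq; apply: quot_sval_eq => U FU.
have [V FV VV_U] := base_mulV FU.
have [w [Vpw Vqw]] := pq _ _ (nbhs_quot_ball p FV) (nbhs_quot_ball q FV).
have := VV_U _ _ Vpw Vqw.
by rewrite (law_invMg gl) (law_invgK gl) -!(law_mulgA gl) (law_mulKVg gl).
Qed.

Lemma quot_character (K : Type) : small K F -> character_le H K.
Proof.
move=> Fsmall h; exists ((fun U => interior (quot_ball h U)) @` F); split.
  by apply: small_card_le; exact: small_image.
split.
  by move=> _ [U FU <-]; split; [exact: open_interior | exact: nbhs_quot_ball].
move=> W /nbhs_quotP [U FU UW]; exists (interior (quot_ball h U)); first by exists U.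
by move=> q /interior_subset; exact: UW.
Qed.

(* A base: the interiors of the balls of radius [U] centred in [A_V], for
   [U], [V] in [F] and [A_V] small with [A_V V] the whole group. *)
Lemma quot_weight (K : Type) : infinite_set [set: K] -> small K F ->
  (forall U, F U -> exists A, small K A /\
     forall g, exists a u, A a /\ U u /\ g = mul a u) ->
  weight_le H K.
Proof.
move=> Kinf Fsmall Fnarrow.
have [A AP] := choice_in (fun _ => set0) Fnarrow.
pose base := \bigcup_(U in F) \bigcup_(V in F)
  ((fun a => interior (quot_ball (quot_pi a) U)) @` A V).
exists base; split.
  apply: small_card_le; apply: (small_bigcup Kinf setT) => // U _.
  apply: (small_bigcup Kinf setT) => // V FV.
  by apply: small_image; case: (AP _ FV).
split; first by move=> _ [U _ [V _ [a _ <-]]]; exact: open_interior.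
move=> W h oW Wh.
have /nbhs_quotP [U FU UW] : nbhs h W by rewrite openE in oW; exact: oW.
have [V1 FV1 V1V1V1_U] := base_mul3 FU.
have [V2 FV2 V2_V1] := base_inv FV1.
have [V3 FV3 V3V3V3_V1] := base_mul3 FV1.
have [_ /(_ (sval h)) [a [u [Aa [[V2u V3u] ha]]]]] := AP _ (base_setI FV2 FV3).
exists (interior (quot_ball (quot_pi a) V1)).
  by exists V1 => //; exists (V2 `&` V3); [exact: base_setI | exists a].
have mid x y z w : mul (inv x) w =
    mul (mul (mul (inv x) y) (mul (inv y) z)) (mul (inv z) w).
  by rewrite -!(law_mulgA gl) !(law_mulKVg gl).
split.
  apply/nbhs_quotP; exists V3 => // q V3q.
  rewrite /quot_ball /= (mid _ a (sval h)); apply: V3V3V3_V1 => //.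
  - exact: (base_eq_sym (quot_piP a)) _ FV3.
  - by rewrite ha (law_mulKg gl).
move=> q /interior_subset /= V1q; apply: UW.
rewrite /quot_ball /= (mid _ a (sval (quot_pi a))); apply: V1V1V1_U => //.
- rewrite ha (law_invMg gl) -(law_mulgA gl) (law_mulVg gl) (law_mulg1 gl).
  exact: V2_V1.
- exact: (quot_piP a) _ FV1.
Qed.

End QuotientGroup.

Lemma uniform_tychonoff (T : uniformType) : hausdorff_space T -> tychonoff_space T.
Proof.
move=> hT; split=> // C x clC nCx.
have := @uniform_completely_regular Rdefinitions.R T x C clC nCx.
move/(uniform_separatorP (R := Rdefinitions.R)) => [f [cf _ f0 f1]].
exists f; split=> //; split; first by apply: f0; exists x.
by move=> y Cy; apply: f1; exists y.
Qed.

(* Write [x = u^-1 a^-1] with [a] in the small set [A] and [u, u^-1] in [V];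
   then [x w x^-1 = u^-1 (a^-1 w a) u], so conjugating [V] by the [a^-1]
   suffices for [V V V]. *)
Lemma narrow_balanced (K : Type) (G : topologicalType) (mul : G -> G -> G)
    (inv : G -> G) (one : G) :
  is_topgroup mul inv one -> narrow mul one K -> balanced mul inv one K.
Proof.
move=> tg nar; have gl := topgroup_laws tg.
move=> U /(nbhs_one_mul3 tg) [V nV VVV_U].
pose Vs := V `&` [set a | V (inv a)].
have nVs : nbhs one Vs by apply: filterI; [exact: nV | exact: (nbhs_one_inv tg nV)].
have [A [AK Acover]] := nar _ (nbhs_one_inv tg nVs).
pose conjV a := [set w | V (mul (mul (inv a) w) (inv (inv a)))].
exists (conjV @` A); split; first exact: card_le_trans (card_image_le _ _) AK.
split; first by move=> _ [a _ <-]; exact: (nbhs_one_conj tg).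
move=> x; have [a [u [Aa [[Vu1 Vu2] ix]]]] := Acover (inv x).
exists (conjV a); first by exists a.
move=> w Vw.
have -> : x = mul (inv u) (inv a) by rewrite -(law_invgK gl x) ix (law_invMg gl).
have -> : mul (mul (mul (inv u) (inv a)) w) (inv (mul (inv u) (inv a))) =
    mul (mul (inv u) (mul (mul (inv a) w) (inv (inv a)))) u.
  by rewrite (law_invMg gl) !(law_invgK gl) -!(law_mulgA gl).
by apply: VVV_U => //; move: Vu2; rewrite /= (law_invgK gl).
Qed.

Section ActionControl.
Variables (G X : topologicalType) (mul : G -> G -> G) (inv : G -> G)
  (one : G) (alpha : G -> X -> X).
Hypotheses (tg : is_topgroup mul inv one) (act : is_continuous_action mul one alpha).

Let gl := topgroup_laws tg.
Let act1 x : alpha one x = x. Proof. by case: act. Qed.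
Let actM g h x : alpha (mul g h) x = alpha g (alpha h x). Proof. by case: act. Qed.

Definition controls (F : set (set G)) := forall g x O, nbhs (alpha g x) O ->
  exists2 U, F U & exists2 V, nbhs x V &
    forall u y, U u -> V y -> O (alpha (mul g u) y).

Definition controls_at (F : set (set G)) (x0 : X) := forall O, nbhs x0 O ->
  exists2 U, F U & exists2 V, nbhs x0 V & forall u y, U u -> V y -> O (alpha u y).

Lemma nbhs_act g x O : nbhs (alpha g x) O -> nbhs x [set y | O (alpha g y)].
Proof.
have [cact _ _] := act.
move=> /(cact (g, x)) /nbhs_pair [A [C [nA nC AC_O]]].
by apply: filterS nC => y Cy; apply: AC_O => //; exact: nbhs_singleton.
Qed.

Lemma controls_at_seed (K : Type) : character_le X K -> forall x0,
  exists S0 : set (set G),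
  [/\ small K S0, forall U, S0 U -> nbhs one U &
      forall F, S0 `<=` F -> controls_at F x0].
Proof.
move=> chX x0; have [Bx [BxK [Bx_open Bx_base]]] := chX x0.
have [W WP] : exists W : set X -> set G * set X, forall b, Bx b ->
    [/\ nbhs one (W b).1, nbhs x0 (W b).2 &
     forall g y, (W b).1 g -> (W b).2 y -> b (alpha g y)].
  apply: (choice_in (fun _ => (setT, setT)) (Q := Bx) (R := fun b p =>
    [/\ nbhs one p.1, nbhs x0 p.2 & forall g y, p.1 g -> p.2 y -> b (alpha g y)])).
  move=> b Bb; have [cact _ _] := act.
  have : nbhs (alpha one x0) b by rewrite act1; apply: open_nbhs_nbhs; exact: Bx_open.
  by move=> /(cact (one, x0)) /nbhs_pair [A [C [nA nC AC_b]]]; exists (A, C).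
exists ((fun b => (W b).1) @` Bx); split.
- exact/small_image/(card_le_small setT BxK).
- by move=> _ [b Bb <-]; case: (WP _ Bb).
- move=> F S0F O /Bx_base [b Bb bO]; have [_ nC WC_b] := WP _ Bb.
  exists (W b).1; first by apply: S0F; exists b.
  by exists (W b).2 => // u y Wu Cy; apply: bO; exact: WC_b.
Qed.

(* Transport along [alpha k] and conjugation by [k] move the control from
   [x0] to [alpha k x0]. *)
Lemma controls_from_at F x0 : transitive_action alpha -> group_base mul inv F ->
  controls_at F x0 -> controls F.
Proof.
move=> tr [_ _ Fconj _] Fat g x O; have [k <-] := tr x0 x.
move=> /nbhs_act /nbhs_act /Fat [U FU [C nC UC_O]].
have [V FV V_U] := Fconj U (inv k) FU.
exists V => //; exists [set y | C (alpha (inv k) y)].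
  by apply: nbhs_act; rewrite -actM (law_mulVg gl) act1.
move=> u y Vu Cy; have := UC_O _ _ (V_U _ Vu) Cy; rewrite /= -!actM.
by rewrite (law_invgK gl) -!(law_mulgA gl) (law_mulgV gl) (law_mulg1 gl) (law_mulKVg gl).
Qed.

Lemma controls_kernel F : hausdorff_space X -> controls F ->
  forall n, (forall U, F U -> U n) -> forall x, alpha n x = x.
Proof.
move=> Xhaus Fctl n Nn x; apply: Xhaus => A C nA.
rewrite -{1}(act1 x) => /Fctl [U FU [V nV UV_C]].
exists (alpha n x); split; first exact: nbhs_singleton.
by rewrite -(law_mul1g gl n); apply: UV_C; [exact: Nn | exact: nbhs_singleton].
Qed.

End ActionControl.

Lemma controlling_base_exists (K : Type) (G X : topologicalType)
    (mul : G -> G -> G) (inv : G -> G) (one : G) (alpha : G -> X -> X) :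
  infinite_set [set: K] -> is_topgroup mul inv one ->
  is_continuous_action mul one alpha -> transitive_action alpha ->
  balanced mul inv one K -> character_le X K ->
  exists F : set (set G), [/\ small K F, forall U, F U -> nbhs one U, F setT,
    group_base mul inv F & controls mul alpha F].
Proof.
move=> Kinf tg act tr bal chX.
have [S0 [S0small S0nbhs S0ctl]] : exists S0 : set (set G), [/\ small K S0,
    forall U, S0 U -> nbhs one U &
    forall F, S0 `<=` F -> group_base mul inv F -> controls mul alpha F].
  have [[x0 _]|X0] := pselect (exists x : X, True).
    have [S0 [S0small S0nbhs S0at]] := controls_at_seed act chX x0.
    exists S0; split=> // F S0F Fbase.
    exact: (controls_from_at tg act tr Fbase (S0at _ S0F)).
  exists set0; split=> //; first exact: sub_small (small_set1 Kinf setT).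
  by move=> F _ _ g x; case: X0; exists x.
have [|F [S0F Fsmall Fnbhs Fbase]] := group_base_closure Kinf tg bal
    (small_setU Kinf setT (small_set1 Kinf setT) S0small).
  by move=> U [->|/S0nbhs//]; exact: filterT.
exists F; split=> //; first by apply: S0F; left.
by apply: S0ctl => // U S0U; apply: S0F; right.
Qed.

Section QuotientAction.
Variables (G X : topologicalType) (mul : G -> G -> G) (inv : G -> G) (one : G)
  (alpha : G -> X -> X).
Hypotheses (Xhaus : hausdorff_space X) (tg : is_topgroup mul inv one)
  (act : is_continuous_action mul one alpha) (tr : transitive_action alpha).
Variable F : set (set G).
Hypotheses (Fnbhs : forall U, F U -> nbhs one U) (FT : F setT)
  (Fbase : group_base mul inv F) (Fctl : controls mul alpha F).

Let gl := topgroup_laws tg.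

Definition action_group : based_group := @BasedGroup G mul inv one gl F FT
  (fun U FU => nbhs_singleton (Fnbhs FU)) Fbase.

Definition quot_action (h : quot action_group) (x : X) : X := alpha (sval h) x.

Lemma act_base_eq a b x : base_eq (B := action_group) a b -> alpha a x = alpha b x.
Proof.
have [_ _ actM] := act.
move=> ab; rewrite -[b](law_mulKVg gl a) actM; congr (alpha a _).
by rewrite (controls_kernel tg act Xhaus Fctl ab).
Qed.

Lemma quot_action_continuous :
  is_continuous_action (@quot_mul action_group) (quot_one action_group) quot_action.
Proof.
have [_ act1 actM] := act.
split.
- move=> [h x] O /= /Fctl [U FU [V nV UV_O]].
  exists (quot_ball h U, V); first by split=> //; exact: nbhs_quot_ball.
  move=> [h' x'] /= [Uh' Vx']; rewrite /quot_action.
  by have := UV_O _ _ Uh' Vx'; rewrite (law_mulKVg gl).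
- move=> x; rewrite /quot_action.
  by rewrite -(act_base_eq x (quot_piP (B := action_group) one)) act1.
- move=> g h x; rewrite /quot_action.
  by rewrite -(act_base_eq x (quot_piP (B := action_group) _)) actM.
Qed.

Lemma quot_action_transitive : transitive_action quot_action.
Proof.
move=> x y; have [g gxy] := tr x y; exists (quot_pi (B := action_group) g).
by rewrite /quot_action -gxy -(act_base_eq x (quot_piP (B := action_group) g)).
Qed.

Lemma quot_acts_transitively
    (P : forall H : topologicalType, (H -> H -> H) -> (H -> H) -> H -> Prop) :
  P (quot action_group) (@quot_mul action_group) (@quot_inv action_group)
    (quot_one action_group) -> acts_transitively_via X P.
Proof.
move=> PH; exists (quot action_group), (@quot_mul action_group),
  (@quot_inv action_group), (quot_one action_group), quot_action.
split=> //; last exact: quot_action_transitive.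
- exact/uniform_tychonoff/quot_hausdorff.
- exact: quot_topgroup.
- exact: quot_action_continuous.
Qed.

End QuotientAction.

Arguments quot_acts_transitively [G X mul inv one alpha] Xhaus tg act tr [F]
  Fnbhs FT Fbase Fctl [P].

Theorem corollary3p5 (K : Type) (G X : topologicalType)
    (mul : G -> G -> G) (inv : G -> G) (one : G) (alpha : G -> X -> X) :
  infinite_set [set: K] ->
  tychonoff_space G -> tychonoff_space X ->
  is_topgroup mul inv one ->
  is_continuous_action mul one alpha ->
  transitive_action alpha ->
  character_le X K ->
  (narrow mul one K ->
     acts_transitively_via X (fun H _ _ _ => weight_le H K)) /\
  (balanced mul inv one K ->
     acts_transitively_via X (fun H _ _ _ => character_le H K)).
Proof.
move=> Kinf _ [Xhaus _] tg act tr chX.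
have base := controlling_base_exists Kinf tg act tr _ chX.
split=> [nar|bal].
  have [F [Fsmall Fnbhs FT Fbase Fctl]] := base (narrow_balanced tg nar).
  apply: (quot_acts_transitively Xhaus tg act tr Fnbhs FT Fbase Fctl).
  apply: quot_weight => // U /Fnbhs /nar [A [AK Acover]].
  by exists A; split=> //; exact: (card_le_small (T := G) one AK).
have [F [Fsmall Fnbhs FT Fbase Fctl]] := base bal.
apply: (quot_acts_transitively Xhaus tg act tr Fnbhs FT Fbase Fctl).
exact: quot_character.
Qed.
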